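(* Let $m,K$ be positive integers, and for $\ell\in\{1,\dots,K\}$ let $\mathbf B_\ell$ be a real $m\times s_\ell$ matrix. Let $\alpha\in\mathbb R$ and let $\boldsymbol\Sigma$ be any $m\times m$ symmetric nonnegative definite matrix such that $\mathrm{tr}(\mathbf B_\ell'\boldsymbol\Sigma\mathbf B_\ell)\le\alpha$ for all $\ell\in\{1,\dots,K\}$. Let $\mathbf w=(w_1,\dots,w_K)'\in\mathbb R^K$ have nonnegative components summing to $1$, and let $\mathbf N(\mathbf w)=\sum_{\ell=1}^K w_\ell\mathbf B_\ell\mathbf B_\ell'$. Let $\mathbf X$ be a real $m\times r$ matrix with $\mathcal C(\mathbf X)\subseteq\mathcal C(\mathbf N(\mathbf w))$. Then $$\mathrm{tr}(\mathbf X'\boldsymbol\Sigma\mathbf X)\le \alpha\,\lambda_{\max}\big(\mathbf X'\mathbf N^+(\mathbf w)\mathbf X\big).$$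
   Context: $\mathcal C(\cdot)$ denotes the column space of a matrix, $\mathbf A^+$ the Moore–Penrose pseudoinverse, $\mathbf A'$ the transpose, and $\lambda_{\max}$ the largest eigenvalue of a symmetric matrix. *)

From HB Require Import structures.
From mathcomp Require Import all_boot all_order all_algebra.
From mathcomp Require Export all_boot all_order all_algebra.
From mathcomp Require Export reals.
Set Implicit Arguments. Unset Strict Implicit. Unset Printing Implicit Defensive.
Import Order.TTheory GRing.Theory Num.Theory.
Local Open Scope ring_scope.

Definition nnd (R : realType) (m : nat) (S : 'M[R]_m) : Prop :=
  S^T = S /\ forall v : 'cV[R]_m, 0 <= (v^T *m S *m v) 0 0.

Definition is_pinv (R : realType) (m n : nat) (A : 'M[R]_(m, n)) (P : 'M[R]_(n, m)) : Prop :=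
  [/\ A *m P *m A = A, P *m A *m P = P,
      (A *m P)^T = A *m P & (P *m A)^T = P *m A].

Definition colspace_sub (R : realType) (m p q : nat) (X : 'M[R]_(m, p)) (Y : 'M[R]_(m, q)) : bool :=
  (X^T <= Y^T)%MS.

Definition is_lambda_max (R : realType) (n : nat) (A : 'M[R]_n) (lam : R) : Prop :=
  eigenvalue A lam /\ forall mu, eigenvalue A mu -> mu <= lam.

Definition Nw (R : realType) (m K : nat) (s : 'I_K -> nat)
  (B : forall l : 'I_K, 'M[R]_(m, s l)) (w : 'I_K -> R) : 'M[R]_m :=
  \sum_(l < K) w l *: (B l *m (B l)^T).

(* Write N := N(w) and M := X' N^+ X.  Since C(X) ⊆ C(N) we have X = N Y for
   some Y, and the Penrose identity N N^+ N = N turns M into the Gram-type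
   matrix Y' N Y, which is nonnegative definite, so lambda := lambda_max(M) >= 0.
   The heart of the argument is the matrix inequality
        X X' = (N Y)(N Y)'  <=  lambda N      (Loewner order),
   obtained from the Cauchy-Schwarz inequality for the semi-inner product
   <a, b>_N = a' N b together with the Rayleigh bound u' M u <= lambda u' u.
   Taking the trace against Sigma, and using that the trace of a product of
   two nonnegative definite matrices is nonnegative, gives
        tr(X' Sigma X) = tr(Sigma X X') <= lambda tr(Sigma N) <= lambda alpha,
   the last step because tr(Sigma N) is a convex combination of the
   tr(B_l' Sigma B_l) <= alpha.  The nonnegativity of tr(S T) and the Rayleigh
   bound are proved by diagonalising over the complex numbers R[i], where the
   library provides the spectral theorem for Hermitian matrices. *)

From mathcomp Require Import all_boot all_order all_algebra reals.
From mathcomp Require Import sesquilinear spectral complex.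
From mathcomp Require Import ring lra.
Import Order.TTheory GRing.Theory Num.Theory Num.Def.
Set Implicit Arguments. Unset Strict Implicit. Unset Printing Implicit Defensive.
Local Open Scope ring_scope.

(* A real quadratic q - 2 c s + c^2 lam s that is nonnegative for every c,
   with lam >= 0, forces s <= lam q: this is the discriminant form of the
   Cauchy-Schwarz inequality used below. *)
Lemma quadratic_nonneg_bound (R : realFieldType) (q s lam : R) : 0 <= lam ->
  (forall c, 0 <= q - 2 * c * s + c ^+ 2 * lam * s) -> s <= lam * q.
Proof.
move=> lam_ge0 Hc; have [lam_gt0|] := ltP 0 lam; last first.
  move=> lam_le0; have lam0 : lam = 0 by apply/eqP; rewrite eq_le lam_le0.
  subst lam.
  rewrite mul0r leNgt; apply/negP => s_gt0.
  have cancel_s : 2 * ((q + 1) / (2 * s)) * s = q + 1.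
    by field; rewrite gt_eqF.
  by have := Hc ((q + 1) / (2 * s)); rewrite mulr0 mul0r addr0 cancel_s; lra.
have lamV : lam * lam^-1 = 1 by rewrite divff // gt_eqF.
have := mulr_ge0 (ltW lam_gt0) (Hc lam^-1).
have -> : lam * (q - 2 * lam^-1 * s + lam^-1 ^+ 2 * lam * s)
  = lam * q - 2 * (lam * lam^-1) * s + (lam * lam^-1) ^+ 2 * s by ring.
rewrite lamV; lra.
Qed.

Lemma colspace_subP (R : realType) (m p q : nat) (X : 'M[R]_(m, p))
    (Y : 'M[R]_(m, q)) :
  colspace_sub X Y -> exists D : 'M[R]_(q, p), X = Y *m D.
Proof.
by case/submxP => D hD; exists D^T; rewrite -[X]trmxK hD trmx_mul trmxK.
Qed.

Section NonnegativeDefinite.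
Variable R : rcfType.

Definition psdmx (n : nat) (S : 'M[R]_n) : Prop :=
  S^T = S /\ forall v : 'cV[R]_n, 0 <= (v^T *m S *m v) 0 0.

Lemma sqr_norm_ge0 (n : nat) (x : 'rV[R]_n) : 0 <= (x *m x^T) 0 0.
Proof. by rewrite mxE; apply: sumr_ge0 => j _; rewrite mxE -expr2 sqr_ge0. Qed.

Lemma sqr_norm_gt0 (n : nat) (x : 'rV[R]_n) : x != 0 -> 0 < (x *m x^T) 0 0.
Proof.
move=> x_neq0; rewrite lt_def sqr_norm_ge0 andbT; apply: contra x_neq0.
rewrite mxE => /eqP sum0; apply/eqP/rowP => j.
have sq_ge0 (i : 'I_n) : predT i -> 0 <= x 0 i * x^T i 0.
  by move=> _; rewrite mxE -expr2 sqr_ge0.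
move: (psumr_eq0P sq_ge0 sum0 (isT : predT j)).
by rewrite !mxE => /eqP; rewrite mulf_eq0 orbb => /eqP.
Qed.

Lemma gram_quadE (n k : nat) (A : 'M[R]_(n, k)) (v : 'cV[R]_n) :
  v^T *m (A *m A^T) *m v = (v^T *m A) *m (v^T *m A)^T.
Proof. by rewrite trmx_mul trmxK !mulmxA. Qed.

Lemma gram_psd (n k : nat) (A : 'M[R]_(n, k)) : psdmx (A *m A^T).
Proof.
by split=> [|v]; [rewrite trmx_mul trmxK | rewrite gram_quadE sqr_norm_ge0].
Qed.

Lemma psd_congr (n r : nat) (S : 'M[R]_n) (Y : 'M[R]_(n, r)) :
  psdmx S -> psdmx (Y^T *m S *m Y).
Proof.
case=> S_sym S_psd; split=> [|v]; first by rewrite !trmx_mul trmxK S_sym mulmxA.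
by have := S_psd (Y *m v); rewrite trmx_mul !mulmxA.
Qed.

Lemma psd_eigen_ge0 (n : nat) (S : 'M[R]_n) (mu : R) :
  psdmx S -> eigenvalue S mu -> 0 <= mu.
Proof.
case=> _ S_psd /eigenvalueP [v Sv v_neq0].
have := S_psd v^T; rewrite trmxK Sv -scalemxAl mxE.
by rewrite pmulr_lge0 // sqr_norm_gt0.
Qed.

Local Open Scope sesquilinear_scope.
Local Notation C := (R[i]).
Local Notation toC := (real_complex R).

Lemma conj_toC (x : R) : conjC (toC x) = toC x.
Proof. by apply: conj_Creal; rewrite /real_complex_def complex_real. Qed.

Lemma conjtr_map_toC (m n : nat) (A : 'M[R]_(m, n)) :
  (map_mx toC A)^t* = map_mx toC A^T.
Proof. by apply/matrixP => i j; rewrite !mxE conj_toC. Qed.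

(* A real nonnegative definite matrix is also nonnegative as a Hermitian form
   on complex vectors: splitting p = a + i b, the cross terms cancel by
   symmetry and p T p* = a T a' + b T b'. *)
Lemma psd_hermitian_form_ge0 (n : nat) (T : 'M[R]_n) (p : 'rV[C]_n) :
  psdmx T -> 0 <= (p *m map_mx toC T *m (p^t*)) 0 0.
Proof.
case=> T_sym T_psd.
pose a := map_mx (@complex.Re R) p; pose b := map_mx (@complex.Im R) p.
have p_split : p = map_mx toC a + 'i *: map_mx toC b.
  by apply/matrixP => i j; rewrite !mxE {1}[p i j]complexE complexiE.
have p_conj : p^t* = (map_mx toC a)^t* - 'i *: (map_mx toC b)^t*.
  apply/matrixP => i j; rewrite p_split !mxE rmorphD rmorphM /= conjCi.
  by rewrite !conj_toC mulNr.
rewrite p_conj {1}p_split !conjtr_map_toC.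
rewrite !mulmxDl !mulmxBr -!scalemxAl -!scalemxAr -!map_mxM.
have cross : b *m T *m a^T = a *m T *m b^T.
  have tr_cross : (b *m T *m a^T)^T = a *m T *m b^T.
    by rewrite !trmx_mul trmxK T_sym mulmxA.
  by apply/matrixP => i j; rewrite !ord1 -tr_cross [RHS]mxE.
have qa : 0 <= (a *m T *m a^T) 0 0 by have := T_psd a^T; rewrite trmxK.
have qb : 0 <= (b *m T *m b^T) 0 0 by have := T_psd b^T; rewrite trmxK.
rewrite cross; move: qa qb.
move: (a *m T *m a^T) (a *m T *m b^T) (b *m T *m b^T) => x y z x_ge0 z_ge0.
rewrite !mxE.
have -> : forall u v w : C, u - 'i * v + ('i * v - 'i * ('i * w)) = u + w.
  by move=> u v w; rewrite mulrA -expr2 sqrCi; ring.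
by rewrite -rmorphD ler0c addr_ge0.
Qed.

(* The trace of S T is nonnegative when S is symmetric with nonnegative
   spectrum and T is nonnegative definite: diagonalise S = P* D P with P
   unitary; then tr(S T) is the sum of the eigenvalues d_k >= 0 weighted by
   the values p_k T p_k* >= 0 of the rows of P. *)
Lemma trace_mul_psd (n : nat) (S T : 'M[R]_n) : S^T = S ->
  (forall mu, eigenvalue S mu -> 0 <= mu) -> psdmx T -> 0 <= \tr (S *m T).
Proof.
move=> S_sym S_spec T_nnd.
set Sc := map_mx toC S.
have Sc_herm : Sc \is hermsymmx.
  by apply/is_hermitianmxP; rewrite expr0 scale1r conjtr_map_toC S_sym.
have /orthomx_spectralP Sc_diag := hermitian_normalmx Sc_herm.
have P_unitary : spectralmx Sc \is unitarymx := spectral_unitarymx Sc.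
have d_real := hermitian_spectral_diag_real Sc_herm.
move: Sc_diag d_real P_unitary.
set P := spectralmx Sc; set d := spectral_diag Sc; clearbody P d.
move=> Sc_diag d_real P_unitary; rewrite invmx_unitary // in Sc_diag.
have PPt : P *m P^t* = 1%:M by apply/unitarymxP.
have d_ge0 (k : 'I_n) : 0 <= d 0 k.
  have dk_real : d 0 k \is Num.real by move/mxOverP: d_real; apply.
  rewrite -(RRe_real dk_real) ler0c.
  apply: S_spec; rewrite -(@eigenvalue_map _ _ toC).
  apply/eigenvalueP; exists (row k P).
    rewrite -row_mul -/Sc Sc_diag !mulmxA PPt mul1mx row_mul row_diag_mx.
    by rewrite -scalemxAl rowE; congr (_ *: _); exact/esym/(RRe_real dk_real).
  apply/eqP => row0; have := congr1 (fun M => (M *m P^t*) 0 k) row0.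
  by rewrite -row_mul PPt mul0mx !mxE eqxx /=; move/eqP; rewrite oner_eq0.
suff : 0 <= toC (\tr (S *m T)) by rewrite ler0c.
rewrite -trace_map_mx map_mxM -/Sc Sc_diag -!mulmxA mxtrace_mulC -!mulmxA.
rewrite mul_diag_mx /mxtrace; apply: sumr_ge0 => k _; rewrite mxE.
apply: mulr_ge0 => //.
have := psd_hermitian_form_ge0 (row k P) T_nnd.
suff -> : (row k P *m map_mx toC T *m (row k P)^t*) 0 0
        = (P *m (map_mx toC T *m P^t*)) k k by [].
rewrite mulmxA !mxE; apply: eq_bigr => j _; rewrite !mxE.
by congr (_ * _); apply: eq_bigr => i _; rewrite !mxE.
Qed.

(* Rayleigh bound: if every eigenvalue of the symmetric matrix M is at most
   lam, then u' M u <= lam u' u; indeed lam I - M has nonnegative spectrum, and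
   pairing it with the Gram matrix u u' gives the claim by trace_mul_psd. *)
Lemma rayleigh_le (n : nat) (M : 'M[R]_n) (lam : R) : M^T = M ->
  (forall mu, eigenvalue M mu -> mu <= lam) ->
  forall u : 'cV[R]_n, (u^T *m M *m u) 0 0 <= lam * (u^T *m u) 0 0.
Proof.
move=> M_sym M_le u.
have trace_rank1 (A : 'M[R]_n) : \tr (A *m (u *m u^T)) = (u^T *m A *m u) 0 0.
  by rewrite mulmxA mxtrace_mulC mulmxA /mxtrace big_ord1.
have gap_sym : (lam%:M - M)^T = lam%:M - M.
  by rewrite linearB /= tr_scalar_mx M_sym.
have gap_spec mu : eigenvalue (lam%:M - M) mu -> 0 <= mu.
  case/eigenvalueP => v v_eig v_neq0.
  suff /M_le : eigenvalue M (lam - mu) by rewrite gerBl.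
  apply/eigenvalueP; exists v => //; apply/eqP; rewrite scalerBl eq_sym subr_eq.
  by rewrite -v_eig mulmxBr mul_mx_scalar addrC subrK.
have := trace_mul_psd gap_sym gap_spec (gram_psd u).
rewrite mulmxBl linearB /= !trace_rank1 mul_mx_scalar -scalemxAl mxE.
by rewrite subr_ge0.
Qed.

Lemma sym_quad_line (n : nat) (N : 'M[R]_n) (a b : 'cV[R]_n) (c : R) :
  N^T = N ->
  ((a - c *: b)^T *m N *m (a - c *: b)) 0 0 =
  (a^T *m N *m a) 0 0 - 2 * c * (b^T *m N *m a) 0 0
    + c ^+ 2 * (b^T *m N *m b) 0 0.
Proof.
move=> N_sym; have swap : a^T *m N *m b = b^T *m N *m a.
  have tr_swap : (b^T *m N *m a)^T = a^T *m N *m b.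
    by rewrite !trmx_mul trmxK N_sym mulmxA.
  by apply/matrixP => i j; rewrite !ord1 -tr_swap [LHS]mxE.
have trE : (a - c *: b)^T = a^T - c *: b^T by rewrite linearB linearZ.
rewrite trE !mulmxBl !mulmxBr -!scalemxAl -!scalemxAr swap.
move: (a^T *m N *m a) (b^T *m N *m a) (b^T *m N *m b) => x y z.
by rewrite !mxE; ring.
Qed.

(* Cauchy-Schwarz for the semi-inner product of N, in the form needed here:
   with u = Y' N v and lam bounding the spectrum of Y' N Y, u' u <= lam v' N v.
   It follows from 0 <= (v - c Y u)' N (v - c Y u) for every real c. *)
Lemma range_norm_le (n r : nat) (N : 'M[R]_n) (Y : 'M[R]_(n, r)) (lam : R)
    (v : 'cV[R]_n) : psdmx N -> 0 <= lam ->
  (forall mu, eigenvalue (Y^T *m N *m Y) mu -> mu <= lam) ->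
  ((Y^T *m N *m v)^T *m (Y^T *m N *m v)) 0 0 <= lam * (v^T *m N *m v) 0 0.
Proof.
move=> N_nnd lam_ge0 spec_le; set u := Y^T *m N *m v.
have [N_sym N_psd] := N_nnd.
have [M_sym _] := psd_congr Y N_nnd.
have ray := rayleigh_le M_sym spec_le u.
apply: quadratic_nonneg_bound => // c.
have cross : (Y *m u)^T *m N *m v = u^T *m u.
  by rewrite trmx_mul -!mulmxA (mulmxA Y^T).
have := N_psd (v - c *: (Y *m u)); rewrite sym_quad_line // cross.
have -> : (Y *m u)^T *m N *m (Y *m u) = u^T *m (Y^T *m N *m Y) *m u.
  by rewrite trmx_mul !mulmxA.
have := ler_wpM2l (sqr_ge0 c) ray; nra.
Qed.

Lemma range_outer_dominated (n r : nat) (N : 'M[R]_n) (Y : 'M[R]_(n, r))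
    (lam : R) : psdmx N -> 0 <= lam ->
  (forall mu, eigenvalue (Y^T *m N *m Y) mu -> mu <= lam) ->
  psdmx (lam *: N - (N *m Y) *m (N *m Y)^T).
Proof.
move=> N_nnd lam_ge0 spec_le; have [N_sym _] := N_nnd; split=> [|v].
  by rewrite linearB linearZ /= N_sym trmx_mul trmxK.
have vX : v^T *m (N *m Y) = (Y^T *m N *m v)^T.
  by rewrite !trmx_mul trmxK N_sym mulmxA.
rewrite mulmxBr mulmxBl -scalemxAr -scalemxAl gram_quadE vX trmxK.
have := range_norm_le v N_nnd lam_ge0 spec_le.
move: (_ *m (Y^T *m N *m v)) (v^T *m N *m v) => p q.
by rewrite !mxE subr_ge0.
Qed.

End NonnegativeDefinite.

Section WeightedInformation.
Variables (R : realType) (m K : nat) (s : 'I_K -> nat).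
Variables (B : forall l : 'I_K, 'M[R]_(m, s l)) (w : 'I_K -> R).
Hypothesis w_ge0 : forall l, 0 <= w l.

Lemma Nw_psd : psdmx (Nw B w).
Proof.
split=> [|v].
  apply/matrixP => i j; rewrite mxE !summxE; apply: eq_bigr => l _.
  have [gram_sym _] := gram_psd (B l).
  by rewrite -[in RHS]gram_sym !mxE.
rewrite /Nw mulmx_sumr mulmx_suml summxE; apply: sumr_ge0 => l _.
rewrite -scalemxAr -scalemxAl mxE mulr_ge0 //.
by have [_] := gram_psd (B l); apply.
Qed.

Lemma trace_Nw_le (Sigma : 'M[R]_m) (alpha : R) :
  (forall l, \tr ((B l)^T *m Sigma *m B l) <= alpha) ->
  \sum_(l < K) w l = 1 -> \tr (Sigma *m Nw B w) <= alpha.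
Proof.
move=> tr_le w_sum1; rewrite /Nw mulmx_sumr raddf_sum /=.
apply: le_trans (_ : \sum_(l < K) w l * alpha <= alpha); last first.
  by rewrite -mulr_suml w_sum1 mul1r.
apply: ler_sum => l _; rewrite -scalemxAr mxtraceZ ler_wpM2l //.
by rewrite mulmxA mxtrace_mulC mulmxA.
Qed.

End WeightedInformation.

Theorem lemma1 (R : realType) (m K : nat) (hm : (0 < m)%N) (hK : (0 < K)%N)
  (s : 'I_K -> nat) (B : forall l : 'I_K, 'M[R]_(m, s l))
  (alpha : R) (Sigma : 'M[R]_m)
  (hS : nnd Sigma)
  (htr : forall l : 'I_K, \tr ((B l)^T *m Sigma *m B l) <= alpha)
  (w : 'I_K -> R) (hw0 : forall l, 0 <= w l) (hw1 : \sum_(l < K) w l = 1)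
  (r : nat) (X : 'M[R]_(m, r))
  (hX : colspace_sub X (Nw B w))
  (Np : 'M[R]_m) (hNp : is_pinv (Nw B w) Np)
  (lam : R) (hlam : is_lambda_max (X^T *m Np *m X) lam) :
  \tr (X^T *m Sigma *m X) <= alpha * lam.
Proof.
have N_nnd : psdmx (Nw B w) := Nw_psd B hw0.
have Sigma_nnd : psdmx Sigma := hS.
have [Y XE] := colspace_subP hX.
have [NNpN _ _ _] := hNp; have [lam_eig lam_max] := hlam.
(* The Penrose identity N N^+ N = N gives X' N^+ X = Y' N Y. *)
have ME : X^T *m Np *m X = Y^T *m Nw B w *m Y.
  have [N_sym _] := N_nnd.
  rewrite XE trmx_mul N_sym !mulmxA -(mulmxA _ _ Np) -(mulmxA _ _ (Nw B w)).
  by rewrite NNpN.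
rewrite ME in lam_eig lam_max.
have lam_ge0 : 0 <= lam := psd_eigen_ge0 (psd_congr Y N_nnd) lam_eig.
have dominated := range_outer_dominated N_nnd lam_ge0 lam_max.
have [Sigma_sym _] := Sigma_nnd.
have := trace_mul_psd Sigma_sym (fun mu => psd_eigen_ge0 Sigma_nnd) dominated.
rewrite -XE mulmxBr linearB /= -scalemxAr mxtraceZ subr_ge0 => tr_le.
rewrite mxtrace_mulC mulmxA mxtrace_mulC mulrC; apply: le_trans tr_le _.
by rewrite ler_wpM2l // trace_Nw_le.
Qed.
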